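(* Let $B=(b_{ij})$ be an $n\times n$ integer matrix and let $d_1,\dots,d_n$ be integers such that $b_{ij}d_j=-b_{ji}d_i$ for all $i,j$. Fix $k\in\{1,\dots,n\}$ and assume every entry $b_{kj}$ ($j=1,\dots,n$) of the $k$-th row of $B$ is divisible by $d_k$. Let $l\in\{1,\dots,n\}$ and let $B'=\mu_l(B)$ be the matrix mutation of $B$ in direction $l$. Then every entry $b'_{kj}$ of the $k$-th row of $B'$ is divisible by $d_k$.
   Context: Matrix mutation in direction $l$: $B'=\mu_l(B)$ has entries $b'_{ij}=-b_{ij}$ if $i=l$ or $j=l$, and $b'_{ij}=b_{ij}+\frac{|b_{il}|b_{lj}+b_{il}|b_{lj}|}{2}$ otherwise. *)

From mathcomp Require Import all_boot all_order all_algebra.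
Set Implicit Arguments. Unset Strict Implicit. Unset Printing Implicit Defensive.
Import Order.TTheory GRing.Theory Num.Theory.
Local Open Scope ring_scope.

(* The numerator |b_il| b_lj + b_il |b_lj| is always even, so the integer
   division (divz) is exact. *)
Definition mutate (n : nat) (l : 'I_n) (B : 'M[int]_n) : 'M[int]_n :=
  \matrix_(i < n, j < n)
    if (i == l) || (j == l) then - B i j
    else B i j + ((`|B i l| * B l j + B i l * `|B l j|) %/ 2)%Z.

From mathcomp Require Import all_boot all_order all_algebra.
Import Order.TTheory GRing.Theory Num.Theory.
Local Open Scope ring_scope.

(* The mutation correction (|a| b + a |b|) / 2 is |a| b when a and b have
   the same sign and 0 otherwise, so it is a multiple of a = b_kl. *)

Lemma mutation_term_eq (a b : int) :
  ((`|a| * b + a * `|b|) %/ 2)%Z =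
  if (0 <= a) == (0 <= b) then `|a| * b else 0.
Proof.
have halfK (c : int) : ((c *+ 2) %/ 2)%Z = c by rewrite -[c *+ 2]mulr_natr mulzK.
have [a0|a0] := lerP 0 a; have [b0|b0] := lerP 0 b => /=.
- by rewrite (ger0_norm a0) (ger0_norm b0) -mulr2n halfK.
- by rewrite (ger0_norm a0) (ltr0_norm b0) mulrN subrr div0z.
- by rewrite (ltr0_norm a0) (ger0_norm b0) mulNr addNr div0z.
- by rewrite (ltr0_norm a0) (ltr0_norm b0) mulNr mulrN -opprD -mulr2n -mulNrn
    halfK.
Qed.

Lemma dvdz_mutation_term (e a b : int) :
  (e %| a)%Z -> (e %| (`|a| * b + a * `|b|) %/ 2)%Z.
Proof.
move=> ea; rewrite mutation_term_eq; case: ifP => // _.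
by rewrite dvdz_mulr // dvdzE -abszE.
Qed.

Lemma dvdz_mutate_row (n : nat) (B : 'M[int]_n) (e : int) (k l : 'I_n) :
  (forall j, (e %| B k j)%Z) -> forall j, (e %| mutate l B k j)%Z.
Proof.
move=> ekB j; rewrite mxE; case: ifP => _; first by rewrite rpredN.
by rewrite rpredD ?dvdz_mutation_term.
Qed.

Theorem mainTheorem1 (n : nat) (B : 'M[int]_n) (d : 'I_n -> int)
  (skew : forall i j : 'I_n, B i j * d j = - (B j i * d i))
  (k : 'I_n) (hk : forall j : 'I_n, (d k %| B k j)%Z)
  (l : 'I_n) :
  forall j : 'I_n, (d k %| mutate l B k j)%Z.
Proof. exact: dvdz_mutate_row. Qed.
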